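(* Let $B_n$ be the number of bidirectional ballot sequences of length $n$. Then $B_n=\Theta(2^n/n)$ as $n\to\infty$.
   Context: A 0-1 sequence of length $n$ is a bidirectional ballot sequence if every nonempty prefix and every nonempty suffix of it contains strictly more 1's than 0's. $f=\Theta(g)$ means there are positive constants $c,C$ with $cg(n)\le f(n)\le Cg(n)$ for all sufficiently large $n$. *)

From mathcomp Require Import all_boot all_order all_algebra.
Set Implicit Arguments. Unset Strict Implicit. Unset Printing Implicit Defensive.

(* A 0-1 sequence is a seq bool; true = 1, false = 0. *)
Definition more_ones (s : seq bool) : bool :=
  count_mem false s < count_mem true s.

Definition bidir_ballot (s : seq bool) : bool :=
  [forall k : 'I_(size s).+1, (0 < k) ==> more_ones (take k s)] &&
  [forall k : 'I_(size s), more_ones (drop k s)].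

Definition B (n : nat) : nat :=
  #|[set t : n.-tuple bool | bidir_ballot (tval t)]|.

From mathcomp Require Import all_boot all_order all_algebra.
From mathcomp Require Import zify ring lra.
Import Order.TTheory GRing.Theory Num.Theory.
Set Implicit Arguments. Unset Strict Implicit. Unset Printing Implicit Defensive.

(* Call a sequence a (prefix) ballot sequence when all its nonempty prefixes
   have more 1's than 0's, and let P_n count them.  By the reflection
   principle P_(m+1) = 'C(m, (m+1)/2), so P_n^2 is 4^n/n up to constants.
   A bidirectional ballot sequence is one whose prefixes and suffixes are
   ballot; both conditions are increasing events on the hypercube, so
   Harris' inequality gives P_n^2 <= 2^n B_n.  Conversely the two halves of a
   bidirectional ballot sequence are ballot sequences, so
   B_(a+b) <= P_a P_b.  Both bounds are of order 2^n/n. *)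

Fixpoint bitseqs (n : nat) : seq bitseq :=
  if n is m.+1 then map (cons false) (bitseqs m) ++ map (cons true) (bitseqs m)
  else [:: [::]].

Lemma count_bitseqsS (P : pred bitseq) n :
  count P (bitseqs n.+1) = count (fun s => P (false :: s)) (bitseqs n)
                         + count (fun s => P (true :: s)) (bitseqs n).
Proof. by rewrite /= count_cat !count_map. Qed.

Lemma mem_map_cons (T : eqType) (b c : T) (s : seq T) (L : seq (seq T)) :
  (b :: s \in map (cons c) L) = (b == c) && (s \in L).
Proof.
apply/mapP/andP => [[t Lt [-> ->]] // | [/eqP -> Ls]].
by exists s.
Qed.

Lemma mem_bitseqs n s : (s \in bitseqs n) = (size s == n).
Proof.
elim: n s => [|n IH] [|b s] //=.
- by apply/negbTE; rewrite mem_cat negb_or; apply/andP; split; apply/mapP => -[].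
- by rewrite mem_cat !mem_map_cons !IH; case: b; rewrite /= ?orbF.
Qed.

Lemma uniq_bitseqs n : uniq (bitseqs n).
Proof.
elim: n => [|n IH] //=.
rewrite cat_uniq !map_inj_uniq ?IH //; try by move=> ? ? [].
by rewrite andbT; apply/hasPn => _ /mapP [s _ ->]; rewrite mem_map_cons.
Qed.

Lemma count_bitseqs_rev (P : pred bitseq) n :
  count (P \o rev) (bitseqs n) = count P (bitseqs n).
Proof.
rewrite -count_map; apply/permP/uniq_perm.
- by rewrite map_inj_uniq ?uniq_bitseqs //; exact: (can_inj revK).
- exact: uniq_bitseqs.
move=> s; rewrite mem_bitseqs; apply/mapP/idP => [[t] | ].
  by rewrite mem_bitseqs => /eqP <- ->; rewrite size_rev.
by exists (rev s); rewrite ?revK // mem_bitseqs size_rev.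
Qed.

Lemma B_countE n : B n = count bidir_ballot (bitseqs n).
Proof.
rewrite /B cardE -size_filter -(size_map val); apply/perm_size/uniq_perm.
- by rewrite map_inj_uniq ?enum_uniq //; exact: val_inj.
- exact/filter_uniq/uniq_bitseqs.
move=> s; rewrite mem_filter mem_bitseqs; apply/mapP/andP => [[t] | [bs /eqP ss]].
  by rewrite mem_enum inE => bt ->; rewrite size_tuple.
by exists (Tuple (introT eqP ss)); rewrite // mem_enum inE.
Qed.

Definition prefix_ballot (s : bitseq) : bool :=
  all (fun k => more_ones (take k s)) (iota 1 (size s)).

Definition suffix_ballot (s : bitseq) : bool :=
  all (fun k => more_ones (drop k s)) (iota 0 (size s)).

Lemma bidir_ballotE s : bidir_ballot s = prefix_ballot s && suffix_ballot s.
Proof.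
congr andb; apply/forallP/allP => [H k | H k].
- rewrite mem_iota => /andP [k1 k2]; have k3 : k < (size s).+1 by lia.
  exact: (implyP (H (Ordinal k3))).
- apply/implyP => k0; apply: H; rewrite mem_iota; have := ltn_ord k; lia.
- rewrite mem_iota => /andP [_ k2]; exact: (H (Ordinal k2)).
- by apply: H; rewrite mem_iota /= ltn_ord.
Qed.

Lemma suffix_ballot_rev s : suffix_ballot s = prefix_ballot (rev s).
Proof.
have more_ones_rev t : more_ones (rev t) = more_ones t by rewrite /more_ones !count_rev.
rewrite /suffix_ballot /prefix_ballot size_rev; apply/allP/allP => H k;
  rewrite mem_iota => /andP [k1 k2].
- by rewrite take_rev more_ones_rev; apply: H; rewrite mem_iota; lia.
- have := H (size s - k); rewrite take_rev more_ones_rev subKn; last by lia.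
  by apply; rewrite mem_iota; lia.
Qed.

Lemma count_suffix_ballot n :
  count suffix_ballot (bitseqs n) = count prefix_ballot (bitseqs n).
Proof.
rewrite -(count_bitseqs_rev prefix_ballot).
by apply: eq_count => s /=; rewrite suffix_ballot_rev.
Qed.

Definition bitwise_le (x y : bitseq) : bool := all2 implb x y.

Definition upward_closed (A : pred bitseq) : Prop :=
  forall x y, bitwise_le x y -> A x -> A y.

Lemma bitwise_le_refl x : bitwise_le x x.
Proof. by elim: x => //= -[] x ->. Qed.

Lemma bitwise_le_size x y : bitwise_le x y -> size x = size y.
Proof. by elim: x y => [|a x IH] [|b y] //= /andP [_ /IH ->]. Qed.

Lemma bitwise_le_take k x y : bitwise_le x y -> bitwise_le (take k x) (take k y).
Proof. by elim: x y k => [|a x IH] [|b y] [|k] //= /andP [-> xy]; apply: IH. Qed.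

Lemma bitwise_le_drop k x y : bitwise_le x y -> bitwise_le (drop k x) (drop k y).
Proof. by elim: x y k => [|a x IH] [|b y] [|k] //= /andP [_ xy]; apply: IH. Qed.

Lemma more_ones_upward_closed : upward_closed more_ones.
Proof.
suff mono x y : bitwise_le x y ->
    count_mem true x <= count_mem true y /\ count_mem false y <= count_mem false x.
  by move=> x y /mono [? ?]; rewrite /more_ones; lia.
elim: x y => [|a x IH] [|b y] //= /andP [ab /IH [tx fy]].
by case: a b ab => [] [] //= _; rewrite ?add0n ?add1n ?ltnS; split => //; exact: leqW.
Qed.

Lemma prefix_ballot_upward_closed : upward_closed prefix_ballot.
Proof.
move=> x y xy /allP Px; apply/allP => k; rewrite -(bitwise_le_size xy) => /Px.
exact/more_ones_upward_closed/bitwise_le_take.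
Qed.

Lemma suffix_ballot_upward_closed : upward_closed suffix_ballot.
Proof.
move=> x y xy /allP Px; apply/allP => k; rewrite -(bitwise_le_size xy) => /Px.
exact/more_ones_upward_closed/bitwise_le_drop.
Qed.

Lemma chebyshev_sum2 a0 a1 c0 c1 :
  a0 <= a1 -> c0 <= c1 -> (a0 + a1) * (c0 + c1) <= 2 * (a0 * c0 + a1 * c1).
Proof. by move=> ? ?; nia. Qed.

Lemma harris_count n (A C : pred bitseq) : upward_closed A -> upward_closed C ->
  count A (bitseqs n) * count C (bitseqs n)
    <= 2 ^ n * count (predI A C) (bitseqs n).
Proof.
elim: n A C => [|n IH] A C hA hC; first by rewrite /=; case: (A [::]); case: (C [::]).
have cons_closed (D : pred bitseq) b :
    upward_closed D -> upward_closed (fun s => D (b :: s)).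
  by move=> hD x y xy; apply: hD; rewrite /= xy andbT implybb.
have cons_mono (D : pred bitseq) : upward_closed D ->
    count (fun s => D (false :: s)) (bitseqs n)
      <= count (fun s => D (true :: s)) (bitseqs n).
  by move=> hD; apply: sub_count => s; apply: hD; rewrite /= bitwise_le_refl.
rewrite !count_bitseqsS expnS -mulnA.
apply: leq_trans (chebyshev_sum2 (cons_mono _ hA) (cons_mono _ hC)) _.
by rewrite leq_mul2l mulnDr /=; apply: leq_add; apply: IH; exact: cons_closed.
Qed.

Lemma count_take_drop (A C : pred bitseq) a b :
  count (fun s => A (take a s) && C (drop a s)) (bitseqs (a + b))
    = count A (bitseqs a) * count C (bitseqs b).
Proof.
elim: a A => [|a IH] A /=.
  under eq_count => s do rewrite take0 drop0.
  case: (A [::]); first by rewrite mul1n.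
  by rewrite mul0n (eq_count (a2 := pred0)) ?count_pred0.
rewrite count_cat !count_map /=.
rewrite (IH (fun t => A (false :: t))) (IH (fun t => A (true :: t))).
by rewrite count_bitseqsS mulnDl.
Qed.

Definition prefix_ballots (n : nat) : nat := count prefix_ballot (bitseqs n).

Lemma B_le_mul_prefix_ballots a b : B (a + b) <= prefix_ballots a * prefix_ballots b.
Proof.
rewrite B_countE /prefix_ballots -(count_suffix_ballot b) -count_take_drop.
apply: sub_count => s; rewrite bidir_ballotE => /andP [/allP Ps /allP Ss].
apply/andP; split; apply/allP => k; rewrite mem_iota.
- rewrite size_take_min => /andP [k1 k2]; rewrite take_takel; last by lia.
  by apply: Ps; rewrite mem_iota; lia.
- rewrite size_drop => /andP [_ k2]; rewrite drop_drop.
  by apply: Ss; rewrite mem_iota; lia.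
Qed.

Lemma prefix_ballots_sqr_le_pow2_mul_B n : prefix_ballots n ^ 2 <= 2 ^ n * B n.
Proof.
rewrite -mulnn {2}/prefix_ballots -count_suffix_ballot B_countE (eq_count bidir_ballotE).
exact: harris_count prefix_ballot_upward_closed suffix_ballot_upward_closed.
Qed.

Lemma count_add_eq (T : Type) (P Q R S : pred T) (l : seq T) :
  (forall x, P x + Q x = R x + S x) ->
  count P l + count Q l = count R l + count S l.
Proof. by move=> H; elim: l => //= x l IH; have := H x; lia. Qed.

Lemma count_bitseqs_count_true m t :
  count (fun s => count_mem true s == t) (bitseqs m) = 'C(m, t).
Proof.
elim: m t => [|m IH] [|t] //; rewrite count_bitseqsS /=.
- rewrite [X in _ + X](eq_count (a2 := pred0)) // count_pred0 addn0 bin0.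
  by rewrite -(bin0 m) -(IH 0); apply: eq_count => s; rewrite add0n.
- by rewrite binS -!IH; congr addn; apply: eq_count => s; rewrite ?add0n ?add1n.
Qed.

Lemma count_mem_true_false (s : bitseq) : count_mem true s + count_mem false s = size s.
Proof. by elim: s => //= -[] s IH /=; lia. Qed.

Local Open Scope ring_scope.

Definition height (s : bitseq) : int := (count_mem true s)%:Z - (count_mem false s)%:Z.

Definition step (b : bool) : int := if b then 1 else -1.

Lemma height_cons b s : height (b :: s) = step b + height s.
Proof. by rewrite /height /step; case: b => /=; lia. Qed.

Definition ballot_from (h : int) (s : bitseq) : bool :=
  all (fun k => 0 < h + height (take k s)) (iota 1 (size s)).

Lemma prefix_ballotE s : prefix_ballot s = ballot_from 0 s.
Proof. by apply: eq_all => k; rewrite add0r /more_ones /height; lia. Qed.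

Lemma ballot_from_cons h b s :
  ballot_from h (b :: s) = (0 < h + step b) && ballot_from (h + step b) s.
Proof.
rewrite /ballot_from /= take0 height_cons addr0; congr andb.
rewrite -[2%N]/(1 + 1)%N iotaDl all_map; apply: eq_all => k /=.
by rewrite height_cons addrA.
Qed.

(* The reflection principle, in a form proved by checking that both sides
   obey the same recursion on the first step. *)
Lemma count_ballot_from n (h : int) : 0 <= h ->
  count (ballot_from (h + 1)) (bitseqs n)
    = count (fun s => - h <= height s <= h + 1) (bitseqs n).
Proof.
elim: n h => [|n IH] h h0; first by rewrite /= /ballot_from /height /=; lia.
rewrite !count_bitseqsS.
under eq_count => s do rewrite ballot_from_cons.
under [X in (_ + X)%N]eq_count => s do rewrite ballot_from_cons.
under [in RHS]eq_count => s do rewrite height_cons.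
under [X in (_ = _ + X)%N]eq_count => s do rewrite height_cons.
rewrite /step.
have up : count (fun s => (0 < h + 1 + 1) && ballot_from (h + 1 + 1) s) (bitseqs n)
        = count (fun s => - (h + 1) <= height s <= h + 1 + 1) (bitseqs n).
  have -> : 0 < h + 1 + 1 by lia.
  by rewrite -IH //; lia.
rewrite up; have [-> | h_neq0] := eqVneq h 0.
  rewrite (eq_count (a2 := pred0)) // count_pred0 add0n.
  rewrite -[LHS]addn0 -(count_pred0 (bitseqs n)).
  by apply: count_add_eq => s /=; lia.
have h_gt0 : 0 < h by rewrite lt0r h_neq0.
have down : count (fun s => (0 < h + 1 + -1) && ballot_from (h + 1 + -1) s) (bitseqs n)
        = count (fun s => - (h - 1) <= height s <= h - 1 + 1) (bitseqs n).
  rewrite -IH; last by lia.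
  have -> : 0 < h + 1 + -1 by lia.
  by apply: eq_count => s; rewrite addrK subrK.
by rewrite down; apply: count_add_eq => s /=; lia.
Qed.

Local Close Scope ring_scope.

(* A ballot sequence starts with a 1, after which [count_ballot_from] at
   [h = 0] keeps the tails of final height 0 or 1, i.e. with (m+1)/2 ones. *)
Lemma prefix_ballotsS m : prefix_ballots m.+1 = 'C(m, m.+1 %/ 2).
Proof.
rewrite /prefix_ballots (eq_count prefix_ballotE) count_bitseqsS.
under eq_count => s do rewrite ballot_from_cons.
under [X in (_ + X)%N]eq_count => s do rewrite ballot_from_cons.
rewrite (eq_count (a2 := pred0)) // count_pred0 add0n count_ballot_from //.
rewrite -count_bitseqs_count_true; apply: eq_in_count => s.
rewrite mem_bitseqs => /eqP size_s.
have := count_mem_true_false s; rewrite /height size_s; lia.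
Qed.

Lemma bin_double_succ k : 'C(k.+1.*2, k.+1) = 2 * 'C(k.*2.+1, k.+1).
Proof.
rewrite doubleS binS.
suff -> : 'C(k.*2.+1, k) = 'C(k.*2.+1, k.+1) by rewrite addnn mul2n.
by rewrite -bin_sub; [congr binomial; lia | lia].
Qed.

Lemma mul_central_binomialS k :
  k.+1 * 'C(k.+1.*2, k.+1) = 2 * k.*2.+1 * 'C(k.*2, k).
Proof. by rewrite bin_double_succ mulnCA -mul_bin_diag mulnA. Qed.

Lemma central_binomialS_sqr k :
  k.+1 ^ 2 * 'C(k.+1.*2, k.+1) ^ 2 = 4 * k.*2.+1 ^ 2 * 'C(k.*2, k) ^ 2.
Proof. by rewrite -expnMn mul_central_binomialS !expnMn. Qed.

Lemma central_binomial_sqr_ge k : 16 ^ k <= (4 * k + 1) * 'C(k.*2, k) ^ 2.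
Proof.
elim: k => [|k IH] //; rewrite [16 ^ _]expnS.
have k_pos : 0 < k.+1 ^ 2 by rewrite expn_gt0.
rewrite -(leq_pmul2l k_pos) [X in _ <= X]mulnCA central_binomialS_sqr.
move: IH; set c := 'C(k.*2, k); set X := 16 ^ k => IH.
have : 4 * k.+1 ^ 2 * (4 * k + 1) <= (4 * k.+1 + 1) * k.*2.+1 ^ 2 by nia.
nia.
Qed.

Lemma central_binomial_sqr_le k : (3 * k + 1) * 'C(k.*2, k) ^ 2 <= 16 ^ k.
Proof.
elim: k => [|k IH] //; rewrite [16 ^ _]expnS.
have k_pos : 0 < k.+1 ^ 2 by rewrite expn_gt0.
rewrite -(leq_pmul2l k_pos) [X in X <= _]mulnCA central_binomialS_sqr.
move: IH; set c := 'C(k.*2, k); set X := 16 ^ k => IH.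
have : (3 * k.+1 + 1) * k.*2.+1 ^ 2 <= 4 * k.+1 ^ 2 * (3 * k + 1) by nia.
nia.
Qed.

Lemma prefix_ballots_odd k : prefix_ballots k.*2.+1 = 'C(k.*2, k).
Proof. by rewrite prefix_ballotsS; congr binomial; lia. Qed.

Lemma prefix_ballots_even k : 2 * prefix_ballots k.+1.*2 = 'C(k.+1.*2, k.+1).
Proof.
by rewrite doubleS prefix_ballotsS bin_double_succ; congr (_ * binomial _ _); lia.
Qed.

Lemma expn4_double k : 4 ^ k.*2 = 16 ^ k.
Proof. by rewrite -mul2n expnM. Qed.

Lemma positive_parity_cases n : 0 < n -> exists k, n = k.*2.+1 \/ n = k.+1.*2.
Proof.
case: n => // m _; exists m./2.
by rewrite -{1 3}(odd_double_half m); case: (odd m); [right | left]; lia.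
Qed.

Lemma prefix_ballots_sqr_ge n : 0 < n -> 4 ^ n <= 12 * n * prefix_ballots n ^ 2.
Proof.
move=> /positive_parity_cases [k [-> | ->]].
- have := central_binomial_sqr_ge k.
  rewrite prefix_ballots_odd [4 ^ _]expnS expn4_double; nia.
- have := central_binomial_sqr_ge k.+1.
  rewrite -prefix_ballots_even expn4_double; nia.
Qed.

Lemma prefix_ballots_sqr_le n : n * prefix_ballots n ^ 2 <= 4 ^ n.
Proof.
have [-> // | /positive_parity_cases [k [-> | ->]]] := posnP n.
- have := central_binomial_sqr_le k.
  rewrite prefix_ballots_odd [4 ^ _]expnS expn4_double; nia.
- have := central_binomial_sqr_le k.+1.
  rewrite -prefix_ballots_even expn4_double; nia.
Qed.

Lemma pow2_le_B n : 0 < n -> 2 ^ n <= 12 * n * B n.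
Proof.
move=> n_gt0; rewrite -(@leq_pmul2l (2 ^ n)) ?expn_gt0 // -expnMn.
apply: leq_trans (prefix_ballots_sqr_ge n_gt0) _.
by rewrite mulnCA leq_mul2l prefix_ballots_sqr_le_pow2_mul_B orbT.
Qed.

Lemma B_le_pow2 n : 1 < n -> n * B n <= 3 * 2 ^ n.
Proof.
move=> n_gt1; rewrite -leq_sqr.
set a := n./2; set b := n - a.
have n_ab : n = a + b by lia.
have n_sqr : n ^ 2 <= 5 * (a * b) by nia.
have B_sqr : B n ^ 2 <= prefix_ballots a ^ 2 * prefix_ballots b ^ 2.
  by rewrite -expnMn leq_sqr n_ab B_le_mul_prefix_ballots.
have -> : (3 * 2 ^ n) ^ 2 = 9 * (4 ^ a * 4 ^ b) by rewrite -expnD -n_ab expnMn expnAC.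
rewrite expnMn (leq_trans (leq_mul n_sqr B_sqr)) //.
set Pa := prefix_ballots a ^ 2; set Pb := prefix_ballots b ^ 2.
have -> : 5 * (a * b) * (Pa * Pb) = 5 * ((a * Pa) * (b * Pb)) by ring.
apply: leq_mul => //; apply: leq_mul; exact: prefix_ballots_sqr_le.
Qed.

Local Open Scope ring_scope.

Theorem proposition4 :
  exists (c C : rat) (N : nat), 0 < c /\ 0 < C /\
    forall n : nat, (N <= n)%N ->
      c * (2 ^+ n) / n%:R <= (B n)%:R /\ (B n)%:R <= C * (2 ^+ n) / n%:R.
Proof.
exists (1 / 12), 3, 2%N; split; [lra | split; [lra | move=> n n_ge2]].
have n_gt0 : (0 : rat) < n%:R by rewrite ltr0n; lia.
split.
- rewrite (ler_pdivrMr _ _ n_gt0).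
  have : (2 ^ n)%:R <= (12 * n * B n)%N%:R :> rat by rewrite ler_nat pow2_le_B //; lia.
  rewrite natrX !natrM; lra.
- rewrite (ler_pdivlMr _ _ n_gt0).
  have : (n * B n)%N%:R <= (3 * 2 ^ n)%N%:R :> rat by rewrite ler_nat B_le_pow2.
  rewrite !natrM natrX; lra.
Qed.
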